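(* For the 2-description problem ($L=2$), $\mathcal{RD}_{\text{ZB}}=\mathcal{RD}_{\text{VKG}}$.
   Context: Let $\mathcal{X}$ and $\hat{\mathcal{X}}$ be finite sets, $p_X$ a distribution on $\mathcal{X}$, $X$ a random variable with distribution $p_X$, and $d:\mathcal{X}\times\hat{\mathcal{X}}\to[0,\infty)$ a distortion measure. All auxiliary random variables take values in finite sets. The ZB region $\mathcal{RD}_{\text{ZB}}$ is the set of quintuples $(R_1,R_2,D_{\{1\}},D_{\{2\}},D_{\{1,2\}})$ for which there exist auxiliary random variables $X_{\emptyset},X_{\{1\}},X_{\{2\}}$, jointly distributed with $X$, and functions $\phi_{\{1\}},\phi_{\{2\}},\phi_{\{1,2\}}$ with values in $\hat{\mathcal{X}}$ such that $R_k\ge I(X;X_{\emptyset},X_{\{k\}})$ for $k\in\{1,2\}$; $R_1+R_2\ge 2I(X;X_{\emptyset})+I(X;X_{\{1\}},X_{\{2\}}|X_{\emptyset})+I(X_{\{1\}};X_{\{2\}}|X_{\emptyset})$; $D_{\{k\}}\ge\mathbb{E}[d(X,\phi_{\{k\}}(X_{\emptyset},X_{\{k\}}))]$ for $k\in\{1,2\}$; $D_{\{1,2\}}\ge\mathbb{E}[d(X,\phi_{\{1,2\}}(X_{\emptyset},X_{\{1\}},X_{\{2\}}))]$. The VKG region for $L=2$, $\mathcal{RD}_{\text{VKG}}$, is the set of quintuples $(R_1,R_2,D_{\{1\}},D_{\{2\}},D_{\{1,2\}})$ for which there exist auxiliary random variables $X_{\emptyset},X_{\{1\}},X_{\{2\}},X_{\{1,2\}}$,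 jointly distributed with $X$, and functions $\phi_{\mathcal{K}}$ with values in $\hat{\mathcal{X}}$, such that $R_{\mathcal{K}}\ge\psi(\mathcal{K})$ and $D_{\mathcal{K}}\ge\mathbb{E}[d(X,\phi_{\mathcal{K}}(X_{(2^{\mathcal{K}})}))]$ for all nonempty $\mathcal{K}\subseteq\{1,2\}$, where $R_{\mathcal{K}}=\sum_{k\in\mathcal{K}}R_k$, $X_{(2^{\mathcal{K}})}=\{X_{\mathcal{A}}:\mathcal{A}\subseteq\mathcal{K}\}$, and $\psi(\mathcal{K})=(|\mathcal{K}|-1)I(X;X_{\emptyset})-H(X_{(2^{\mathcal{K}})}|X)+\sum_{\mathcal{A}\subseteq\mathcal{K}}H(X_{\mathcal{A}}|X_{(2^{\mathcal{A}}-\{\mathcal{A}\})})$, with conditioning on $X_{(\emptyset)}$ meaning no conditioning. *)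

From HB Require Import structures.
From mathcomp Require Import all_boot all_order all_algebra.
From mathcomp Require Import reals exp.
Set Implicit Arguments. Unset Strict Implicit. Unset Printing Implicit Defensive.
Import Order.TTheory GRing.Theory Num.Theory.
Local Open Scope ring_scope.

(* Random variables are modelled on a finite probability space (O, p):
   a random variable with values in a finite set T is a map O -> T.
   "Jointly distributed" random variables = maps on a common space. *)

Definition is_pmf (R : realType) (O : finType) (p : O -> R) : Prop :=
  (forall w, 0 <= p w) /\ \sum_(w : O) p w = 1.

Definition law (R : realType) (O T : finType) (p : O -> R) (f : O -> T) (t : T) : R :=
  \sum_(w : O | f w == t) p w.

(* Shannon entropy (natural log; the base is immaterial for the regions). *)
Definition entropy (R : realType) (O T : finType) (p : O -> R) (f : O -> T) : R :=
  - \sum_(t : T) law p f t * ln (law p f t).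

Definition pairRV (O A B : finType) (f : O -> A) (g : O -> B) : O -> A * B :=
  fun w => (f w, g w).

Definition cond_entropy (R : realType) (O A B : finType) (p : O -> R)
  (f : O -> A) (g : O -> B) : R :=
  entropy p (pairRV f g) - entropy p g.

Definition mutinfo (R : realType) (O A B : finType) (p : O -> R)
  (f : O -> A) (g : O -> B) : R :=
  entropy p f + entropy p g - entropy p (pairRV f g).

Definition cmutinfo (R : realType) (O A B C : finType) (p : O -> R)
  (f : O -> A) (g : O -> B) (h : O -> C) : R :=
  entropy p (pairRV f h) + entropy p (pairRV g h)
  - entropy p (pairRV (pairRV f g) h) - entropy p h.

Definition expect (R : realType) (O : finType) (p : O -> R) (F : O -> R) : R :=
  \sum_(w : O) p w * F w.

Definition RD_ZB (R : realType) (Xs Xh : finType) (pX : Xs -> R)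
  (d : Xs -> Xh -> R) (R1 R2 D1 D2 D12 : R) : Prop :=
  exists (O : finType) (p : O -> R) (X : O -> Xs)
         (T0 T1 T2 : finType) (U0 : O -> T0) (U1 : O -> T1) (U2 : O -> T2)
         (phi1 : T0 -> T1 -> Xh) (phi2 : T0 -> T2 -> Xh)
         (phi12 : T0 -> T1 -> T2 -> Xh),
    is_pmf p /\ (forall x, law p X x = pX x) /\
     R1 >= mutinfo p X (pairRV U0 U1) /\
     R2 >= mutinfo p X (pairRV U0 U2) /\
     R1 + R2 >= 2 * mutinfo p X U0 + cmutinfo p X (pairRV U1 U2) U0
                 + cmutinfo p U1 U2 U0 /\
     D1 >= expect p (fun w => d (X w) (phi1 (U0 w) (U1 w))) /\
     D2 >= expect p (fun w => d (X w) (phi2 (U0 w) (U2 w))) /\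
     D12 >= expect p (fun w => d (X w) (phi12 (U0 w) (U1 w) (U2 w))).

(* psi(K) of the VKG region for L = 2, written out for each nonempty
   K of {1,2}; U0 = X_emptyset, U1 = X_{1}, U2 = X_{2}, U12 = X_{1,2}. *)
Definition psi_1 (R : realType) (O Xs T0 T1 : finType) (p : O -> R)
  (X : O -> Xs) (U0 : O -> T0) (U1 : O -> T1) : R :=
  (1 - 1) * mutinfo p X U0 - cond_entropy p (pairRV U0 U1) X
  + (entropy p U0 + cond_entropy p U1 U0).

Definition psi_12 (R : realType) (O Xs T0 T1 T2 T12 : finType) (p : O -> R)
  (X : O -> Xs) (U0 : O -> T0) (U1 : O -> T1) (U2 : O -> T2) (U12 : O -> T12) : R :=
  (2 - 1) * mutinfo p X U0
  - cond_entropy p (pairRV (pairRV (pairRV U0 U1) U2) U12) X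
  + (entropy p U0 + cond_entropy p U1 U0 + cond_entropy p U2 U0
     + cond_entropy p U12 (pairRV (pairRV U0 U1) U2)).

Definition RD_VKG (R : realType) (Xs Xh : finType) (pX : Xs -> R)
  (d : Xs -> Xh -> R) (R1 R2 D1 D2 D12 : R) : Prop :=
  exists (O : finType) (p : O -> R) (X : O -> Xs)
         (T0 T1 T2 T12 : finType) (U0 : O -> T0) (U1 : O -> T1) (U2 : O -> T2)
         (U12 : O -> T12)
         (phi1 : T0 -> T1 -> Xh) (phi2 : T0 -> T2 -> Xh)
         (phi12 : T0 -> T1 -> T2 -> T12 -> Xh),
    is_pmf p /\ (forall x, law p X x = pX x) /\
     R1 >= psi_1 p X U0 U1 /\
     R2 >= psi_1 p X U0 U2 /\
     R1 + R2 >= psi_12 p X U0 U1 U2 U12 /\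
     D1 >= expect p (fun w => d (X w) (phi1 (U0 w) (U1 w))) /\
     D2 >= expect p (fun w => d (X w) (phi2 (U0 w) (U2 w))) /\
     D12 >= expect p (fun w => d (X w) (phi12 (U0 w) (U1 w) (U2 w) (U12 w))).

(* ZB is contained in VKG by taking X_{1,2} constant: the extra term
   I(X; X_{1,2} | X_0 X_1 X_2) of the VKG sum rate then vanishes.

   Conversely, by the functional representation lemma X_{1,2} = W(X_0, X_1, X_2)
   for a random function W independent of (X_0, X_1, X_2), and
   I(X; W | X_0 X_1 X_2) = I(X; X_{1,2} | X_0 X_1 X_2) =: c.  Appending W to X_1
   raises the first rate constraint by at most c and leaves the second unchanged,
   while it raises the ZB sum rate by exactly c; symmetrically for X_2. Since the
   ZB sum rate dominates the sum of the two individual rates, the VKG sum-rate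
   constraint leaves a total slack of at least c in the individual constraints, so
   time sharing between the two refinements, with the time-sharing bit appended
   to X_0, yields a ZB point with the same distortions. *)

From HB Require Import structures.
From mathcomp Require Import all_boot all_order all_algebra.
From mathcomp Require Import reals exp.
From mathcomp Require Import ring lra.
From Stdlib Require Import Btauto.
Import Order.TTheory GRing.Theory Num.Theory.
Local Open Scope ring_scope.
Set Implicit Arguments. Unset Strict Implicit.

Section Entropy.
Variables (R : realType) (O : finType) (p : O -> R).

Lemma entropyE (T : finType) (f : O -> T) :
  entropy p f = - \sum_(w : O) p w * ln (law p f (f w)).
Proof.
rewrite /entropy; congr (- _).
rewrite (partition_big f predT) //=; apply: eq_bigr => t _.
by rewrite /law big_distrl /=; apply: eq_bigr => w /eqP ->.
Qed.

Lemma sum_law (T : finType) (f : O -> T) : \sum_(t : T) law p f t = \sum_w p w.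
Proof. by rewrite [RHS](partition_big f predT). Qed.

Lemma sum_law_pairl (A C : finType) (f : O -> A) (h : O -> C) c :
  \sum_(a : A) law p (pairRV f h) (a, c) = law p h c.
Proof.
rewrite /law (partition_big f predT) //=; apply: eq_bigr => a _.
by apply: eq_bigl => w; rewrite /pairRV xpair_eqE andbC.
Qed.

Lemma sum_law_pairr (A C : finType) (f : O -> A) (h : O -> C) a :
  \sum_(c : C) law p (pairRV f h) (a, c) = law p f a.
Proof. by rewrite /law (partition_big h predT). Qed.

Hypothesis p_ge0 : forall w, 0 <= p w.

Lemma law_ge0 (T : finType) (f : O -> T) t : 0 <= law p f t.
Proof. exact: sumr_ge0. Qed.

Lemma law_gt0 (T : finType) (f : O -> T) w : p w != 0 -> 0 < law p f (f w).
Proof.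
move=> pw; apply: (@lt_le_trans _ _ (p w)); first by rewrite lt_def pw p_ge0.
by rewrite /law (bigD1 w) //= lerDl sumr_ge0.
Qed.

Lemma entropy_indep (A B : finType) (f : O -> A) (g : O -> B) :
  (forall a b, law p (pairRV f g) (a, b) = law p f a * law p g b) ->
  entropy p (pairRV f g) = entropy p f + entropy p g.
Proof.
move=> fg; rewrite !entropyE -opprD -big_split /=; congr (- _).
apply: eq_bigr => w _; have [->|pw] := eqVneq (p w) 0; first by rewrite !mul0r addr0.
by rewrite -mulrDr fg lnM // posrE law_gt0.
Qed.

End Entropy.

Lemma eq_entropy (R : realType) (O O' T : finType) (p : O -> R) (p' : O' -> R)
    (f : O -> T) (f' : O' -> T) :
  law p f =1 law p' f' -> entropy p f = entropy p' f'.
Proof. by move=> ff'; rewrite /entropy; congr (- _); apply: eq_bigr => t _; rewrite ff'. Qed.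

Definition rv_equiv (R : realType) (O A B : finType) (p : O -> R) (f : O -> A) (g : O -> B) :=
  forall w w', p w != 0 -> p w' != 0 -> (f w == f w') = (g w == g w').

(* Closes [rv_equiv] goals between two nestings of pairs of the same components. *)
Ltac rv_equiv_tac :=
  let w := fresh "w" in let w' := fresh "w'" in
  move=> w w' _ _; rewrite /pairRV /= ?xpair_eqE ?eqxx /=; btauto.

Section Equivalence.
Variables (R : realType) (O : finType) (p : O -> R).

Lemma rv_equiv_refl (A : finType) (f : O -> A) : rv_equiv p f f.
Proof. by []. Qed.

Lemma rv_equiv_trans (A B C : finType) (f : O -> A) (g : O -> B) (h : O -> C) :
  rv_equiv p f g -> rv_equiv p g h -> rv_equiv p f h.
Proof. by move=> fg gh w w' pw pw'; rewrite fg ?gh. Qed.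

Lemma rv_equiv_pair (A A' B B' : finType) (f : O -> A) (f' : O -> A')
    (g : O -> B) (g' : O -> B') :
  rv_equiv p f f' -> rv_equiv p g g' -> rv_equiv p (pairRV f g) (pairRV f' g').
Proof. by move=> ff' gg' w w' pw pw'; rewrite /pairRV !xpair_eqE ff' ?gg'. Qed.

Lemma entropy_equiv (A B : finType) (f : O -> A) (g : O -> B) :
  rv_equiv p f g -> entropy p f = entropy p g.
Proof.
move=> fg; rewrite !entropyE; congr (- _); apply: eq_bigr => w _.
have [->|pw] := eqVneq (p w) 0; first by rewrite !mul0r.
congr (_ * ln _); rewrite /law.
rewrite (bigID (fun w' => p w' == 0)) [RHS](bigID (fun w' => p w' == 0)) /=.
rewrite big1; last by move=> i /andP[_ /eqP].
rewrite [X in _ = X + _]big1; last by move=> i /andP[_ /eqP].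
rewrite !add0r; apply: eq_bigl => w'; case: (eqVneq (p w') 0) => pw' /=; first by rewrite !andbF.
by rewrite !andbT fg.
Qed.

Lemma mutinfo_equiv (A A' B B' : finType) (f : O -> A) (f' : O -> A')
    (g : O -> B) (g' : O -> B') :
  rv_equiv p f f' -> rv_equiv p g g' -> mutinfo p f g = mutinfo p f' g'.
Proof.
move=> ff' gg'; rewrite /mutinfo (entropy_equiv ff') (entropy_equiv gg').
by rewrite (entropy_equiv (rv_equiv_pair ff' gg')).
Qed.

Lemma cmutinfo_equiv (A A' B B' C C' : finType) (f : O -> A) (f' : O -> A')
    (g : O -> B) (g' : O -> B') (h : O -> C) (h' : O -> C') :
  rv_equiv p f f' -> rv_equiv p g g' -> rv_equiv p h h' ->
  cmutinfo p f g h = cmutinfo p f' g' h'.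
Proof.
move=> ff' gg' hh'; rewrite /cmutinfo (entropy_equiv hh').
rewrite (entropy_equiv (rv_equiv_pair ff' hh')) (entropy_equiv (rv_equiv_pair gg' hh')).
by rewrite (entropy_equiv (rv_equiv_pair (rv_equiv_pair ff' gg') hh')).
Qed.

End Equivalence.

Lemma ln_le_subr1 (R : realType) (x : R) : 0 < x -> ln x <= x - 1.
Proof. by move=> x0; have := @le_ln1Dx R (x - 1); rewrite addrCA subrr addr0; apply; lra. Qed.

Section Gibbs.
Variables (R : realType) (O A B C : finType) (p : O -> R).
Variables (f : O -> A) (g : O -> B) (h : O -> C).
Hypothesis pp : is_pmf p.

Let p_ge0 : forall w, 0 <= p w. Proof. by case: pp. Qed.
Let fgh := pairRV (pairRV f g) h.

(* [cmutinfo] is the expectation of [- ln ratio], where [law fgh * ratio] is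
   the law making [f] and [g] conditionally independent given [h]. *)
Let ratio (t : (A * B) * C) : R :=
  law p (pairRV f h) (t.1.1, t.2) * law p (pairRV g h) (t.1.2, t.2)
  / (law p h t.2 * law p fgh t).

Lemma cmutinfo_expect_ln : cmutinfo p f g h = \sum_w p w * - ln (ratio (fgh w)).
Proof.
rewrite /cmutinfo !entropyE -!sumrN -!big_split /=; apply: eq_bigr => w _.
have [->|pw] := eqVneq (p w) 0; first by rewrite !mul0r !oppr0 !addr0.
have := law_gt0 p_ge0 (pairRV f h) pw; have := law_gt0 p_ge0 (pairRV g h) pw.
have := law_gt0 p_ge0 fgh pw; have := law_gt0 p_ge0 h pw.
rewrite /ratio /fgh /pairRV /= => ? ? ? ?.
rewrite ln_div ?posrE ?mulr_gt0 // !lnM ?posrE //; ring.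
Qed.

Lemma expect_ratio_le1 : \sum_w p w * ratio (fgh w) <= 1.
Proof.
pose phi (t : (A * B) * C) :=
  law p (pairRV f h) (t.1.1, t.2) * law p (pairRV g h) (t.1.2, t.2) / law p h t.2.
have -> : \sum_w p w * ratio (fgh w) = \sum_t law p fgh t * ratio t.
  rewrite (partition_big fgh predT) //=; apply: eq_bigr => t _.
  by rewrite /law big_distrl /=; apply: eq_bigr => w /eqP ->.
apply: (@le_trans _ _ (\sum_t phi t)).
  apply: ler_sum => t _; have -> : ratio t = phi t / law p fgh t.
    by rewrite /ratio /phi invfM !mulrA.
  have [->|nz] := eqVneq (law p fgh t) 0; last by rewrite mulrC divfK.
  by rewrite mul0r divr_ge0 ?mulr_ge0 ?law_ge0.
rewrite -(pair_bigA _ (fun ab c => phi (ab, c))) /=.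
rewrite -(pair_bigA _ (fun a b => \sum_c phi ((a, b), c))) /=.
rewrite (eq_bigr (fun a => \sum_c law p (pairRV f h) (a, c) * law p h c / law p h c)); last first.
  move=> a _; rewrite exchange_big /=; apply: eq_bigr => c _.
  by rewrite /phi /= -big_distrl -big_distrr /= sum_law_pairl.
rewrite exchange_big /=; apply: (@le_trans _ _ (\sum_c law p h c)); last first.
  by rewrite sum_law; case: pp => _ ->.
apply: ler_sum => c _; rewrite -!big_distrl /= sum_law_pairl.
by have [->|nz] := eqVneq (law p h c) 0; rewrite ?mulr0 ?mul0r // mulfK.
Qed.

Lemma cmutinfo_ge0 : 0 <= cmutinfo p f g h.
Proof.
have [_ p1] := pp.
rewrite cmutinfo_expect_ln.
apply: (@le_trans _ _ (1 - \sum_w p w * ratio (fgh w))); first by rewrite subr_ge0 expect_ratio_le1.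
rewrite -p1 -sumrB; apply: ler_sum => w _.
have [->|pw] := eqVneq (p w) 0; first by rewrite !mul0r subr0.
have r_gt0 : 0 < ratio (fgh w).
  have := law_gt0 p_ge0 (pairRV f h) pw; have := law_gt0 p_ge0 (pairRV g h) pw.
  have := law_gt0 p_ge0 fgh pw; have := law_gt0 p_ge0 h pw.
  by rewrite /ratio /fgh /pairRV /= => *; rewrite divr_gt0 ?mulr_gt0.
rewrite -{1}[p w]mulr1 -mulrBr ler_wpM2l //; have := ln_le_subr1 r_gt0; lra.
Qed.

End Gibbs.

Section ChainRules.
Variables (R : realType) (O : finType) (p : O -> R).
Variables (A B C D : finType) (x : O -> A) (a : O -> B) (b : O -> C) (h : O -> D).

Lemma cmutinfoC : cmutinfo p x a h = cmutinfo p a x h.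
Proof.
rewrite /cmutinfo.
have -> : entropy p (pairRV (pairRV x a) h) = entropy p (pairRV (pairRV a x) h).
  by apply: entropy_equiv; rv_equiv_tac.
by ring.
Qed.

Lemma mutinfo_pairr : mutinfo p x (pairRV a b) = mutinfo p x a + cmutinfo p x b a.
Proof.
rewrite /mutinfo /cmutinfo.
have -> : entropy p (pairRV x a) = entropy p (pairRV a x).
  by apply: entropy_equiv; rv_equiv_tac.
have -> : entropy p (pairRV b a) = entropy p (pairRV a b).
  by apply: entropy_equiv; rv_equiv_tac.
have -> : entropy p (pairRV (pairRV x b) a) = entropy p (pairRV x (pairRV a b)).
  by apply: entropy_equiv; rv_equiv_tac.
by ring.
Qed.

Lemma cmutinfo_pairr :
  cmutinfo p x (pairRV a b) h = cmutinfo p x a h + cmutinfo p x b (pairRV h a).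
Proof.
rewrite /cmutinfo.
have -> : entropy p (pairRV x (pairRV h a)) = entropy p (pairRV (pairRV x a) h).
  by apply: entropy_equiv; rv_equiv_tac.
have -> : entropy p (pairRV b (pairRV h a)) = entropy p (pairRV (pairRV a b) h).
  by apply: entropy_equiv; rv_equiv_tac.
have -> : entropy p (pairRV (pairRV x b) (pairRV h a)) =
          entropy p (pairRV (pairRV x (pairRV a b)) h).
  by apply: entropy_equiv; rv_equiv_tac.
have -> : entropy p (pairRV h a) = entropy p (pairRV a h).
  by apply: entropy_equiv; rv_equiv_tac.
by ring.
Qed.

End ChainRules.

Lemma entropy_cst (R : realType) (O T : finType) (p : O -> R) (t : T) :
  \sum_w p w = 1 -> entropy p (fun _ => t) = 0.
Proof.
move=> p1; rewrite entropyE big1 ?oppr0 // => w _.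
have -> : law p (fun _ => t) t = 1 by rewrite -p1; apply: eq_bigl => w'; rewrite eqxx.
by rewrite ln1 mulr0.
Qed.

Lemma cmutinfo_cst (R : realType) (O A C T : finType) (p : O -> R) (f : O -> A) (h : O -> C)
    (t : T) :
  cmutinfo p f (fun _ => t) h = 0.
Proof.
rewrite /cmutinfo.
have -> : entropy p (pairRV (fun _ => t) h) = entropy p h.
  by apply: entropy_equiv; rv_equiv_tac.
have -> : entropy p (pairRV (pairRV f (fun _ => t)) h) = entropy p (pairRV f h).
  by apply: entropy_equiv; rv_equiv_tac.
by ring.
Qed.

Section Shannon.
Variables (R : realType) (O : finType) (p : O -> R).
Hypothesis pp : is_pmf p.

Lemma mutinfo_ge0 (A B : finType) (f : O -> A) (g : O -> B) : 0 <= mutinfo p f g.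
Proof.
have := cmutinfo_ge0 f g (fun _ => tt) pp; rewrite /cmutinfo /mutinfo.
rewrite entropy_cst; last by case: pp.
have -> : entropy p (pairRV f (fun _ => tt)) = entropy p f.
  by apply: entropy_equiv; rv_equiv_tac.
have -> : entropy p (pairRV g (fun _ => tt)) = entropy p g.
  by apply: entropy_equiv; rv_equiv_tac.
have -> : entropy p (pairRV (pairRV f g) (fun _ => tt)) = entropy p (pairRV f g).
  by apply: entropy_equiv; rv_equiv_tac.
by rewrite subr0.
Qed.

Variables (A B C D : finType) (x : O -> A) (w : O -> B) (a : O -> C) (b : O -> D).
Hypothesis w_indep : mutinfo p w (pairRV a b) = 0.

Lemma cmutinfo_indep0 : cmutinfo p b w a = 0.
Proof.
move: w_indep; rewrite mutinfo_pairr cmutinfoC => wab.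
have := mutinfo_ge0 w a; have := cmutinfo_ge0 b w a pp.
by move=> *; apply/eqP; rewrite eq_le; apply/andP; split; lra.
Qed.

Lemma cmutinfo_le_indep : cmutinfo p x w a <= cmutinfo p x w (pairRV a b).
Proof.
have := cmutinfo_pairr p w x b a; have := cmutinfo_pairr p w b x a.
have -> : cmutinfo p w (pairRV b x) a = cmutinfo p w (pairRV x b) a.
  by apply: cmutinfo_equiv; rv_equiv_tac.
have := cmutinfo_ge0 w b (pairRV a x) pp; have := cmutinfo_indep0.
by rewrite ![cmutinfo p x w _]cmutinfoC [cmutinfo p b w a]cmutinfoC; lra.
Qed.

Lemma mutinfo_refine_le : mutinfo p x (pairRV a w) <= mutinfo p x a + cmutinfo p x w (pairRV a b).
Proof. by rewrite mutinfo_pairr lerD2l cmutinfo_le_indep. Qed.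

End Shannon.

Definition ZB_sum_rate (R : realType) (O A B C D : finType) (p : O -> R)
    (x : O -> A) (u0 : O -> B) (u1 : O -> C) (u2 : O -> D) : R :=
  2 * mutinfo p x u0 + cmutinfo p x (pairRV u1 u2) u0 + cmutinfo p u1 u2 u0.

Lemma mutinfo_pairr_add_le (R : realType) (O A B C D : finType) (p : O -> R)
    (x : O -> A) (u0 : O -> B) (u1 : O -> C) (u2 : O -> D) :
  is_pmf p ->
  mutinfo p x (pairRV u0 u1) + mutinfo p x (pairRV u0 u2) <= ZB_sum_rate p x u0 u1 u2.
Proof.
move=> pp; rewrite /ZB_sum_rate !mutinfo_pairr cmutinfo_pairr.
have := cmutinfo_pairr p u2 u1 x u0; have := cmutinfo_pairr p u2 x u1 u0.
have -> : cmutinfo p u2 (pairRV x u1) u0 = cmutinfo p u2 (pairRV u1 x) u0.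
  by apply: cmutinfo_equiv; rv_equiv_tac.
have := cmutinfo_ge0 u2 u1 (pairRV u0 x) pp.
by rewrite ![cmutinfo p u2 x _]cmutinfoC [cmutinfo p u2 u1 u0]cmutinfoC; lra.
Qed.

Lemma sum_pair_cond (R : realType) (A B : finType) (P : pred A) (Q : pred B) (G : A * B -> R) :
  \sum_(x | P x.1 && Q x.2) G x = \sum_(a | P a) \sum_(b | Q b) G (a, b).
Proof. by rewrite pair_big /=; apply: eq_big => [[a b]|[a b]]. Qed.

Lemma sum_pair_condl (R : realType) (A B : finType) (P : pred A) (G : A * B -> R) :
  \sum_(x | P x.1) G x = \sum_(a | P a) \sum_(b : B) G (a, b).
Proof. by rewrite -sum_pair_cond; apply: eq_bigl => x; rewrite andbT. Qed.

Section FunctionalRepresentation.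
Variables (R : realType) (O TY TZ : finType) (p : O -> R).
Variables (Y : O -> TY) (Z : O -> TZ) (z0 : TZ).
Hypothesis pp : is_pmf p.

Let p_ge0 : forall w, 0 <= p w. Proof. by case: pp. Qed.
Let p_sum1 : \sum_w p w = 1. Proof. by case: pp. Qed.

(* The law of [Z] given [Y = y]; [z0] is an arbitrary default when [y] is null. *)
Definition cond_law (y : TY) (z : TZ) : R :=
  if law p Y y == 0 then (z == z0)%:R else law p (pairRV Y Z) (y, z) / law p Y y.

(* Functional representation of [Z] by [Y]: given the outcome [o], the random
   function [w] has independent values [w y] drawn from [cond_law y], except
   [w (Y o) = Z o]. Averaging over [o], [w] becomes independent of [Y], while
   [w (Y o) = Z o] still holds. *)
Definition frl_kernel (o : O) (w : {ffun TY -> TZ}) : R :=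
  \prod_(y : TY) (if y == Y o then (w y == Z o)%:R else cond_law y (w y)).

Definition frl (x : O * {ffun TY -> TZ}) : R := p x.1 * frl_kernel x.1 x.2.

Lemma cond_law_ge0 y z : 0 <= cond_law y z.
Proof. by rewrite /cond_law; case: ifP => _; rewrite ?ler0n ?divr_ge0 ?law_ge0. Qed.

Lemma sum_cond_law y : \sum_z cond_law y z = 1.
Proof.
rewrite /cond_law; have [e|nz] := eqVneq (law p Y y) 0; last first.
  by rewrite -big_distrl /= sum_law_pairr divff.
by rewrite (bigD1 z0) //= eqxx big1 ?addr0 // => z /negbTE ->.
Qed.

Lemma law_pair_cond_law y z : law p (pairRV Y Z) (y, z) = law p Y y * cond_law y z.
Proof.
have [e|nz] := eqVneq (law p Y y) 0; last by rewrite /cond_law (negbTE nz) mulrC divfK.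
rewrite e mul0r; have := sum_law_pairr p Y Z y; rewrite e => /psumr_eq0P; apply => //.
by move=> c _; exact: law_ge0.
Qed.

Lemma frl_kernel_ge0 o w : 0 <= frl_kernel o w.
Proof. by apply: prodr_ge0 => y _; case: ifP => _; rewrite ?ler0n ?cond_law_ge0. Qed.

Lemma sum_frl_kernel o : \sum_w frl_kernel o w = 1.
Proof.
rewrite /frl_kernel -(bigA_distr_bigA (fun y z => if y == Y o then (z == Z o)%:R else cond_law y z)) /=.
apply: big1 => y _; have [_|ne] := eqVneq y (Y o); last first.
  by rewrite (eq_bigr (cond_law y)) ?sum_cond_law // => z _; rewrite (negbTE ne).
rewrite (eq_bigr (fun z => (z == Z o)%:R)) //.
by rewrite (bigD1 (Z o)) //= eqxx big1 ?addr0 // => z /negbTE ->.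
Qed.

Lemma frl_kernel_supp o w : frl_kernel o w != 0 -> w (Y o) = Z o.
Proof.
apply: contraNeq => ne.
by rewrite /frl_kernel (bigD1 (Y o)) //= eqxx (negbTE ne) mul0r.
Qed.

Lemma frl_supp x : frl x != 0 -> x.2 (Y x.1) = Z x.1.
Proof. by rewrite mulf_eq0 negb_or => /andP[_ /frl_kernel_supp]. Qed.

Lemma frl_pmf : is_pmf frl.
Proof.
split; first by move=> [o w]; rewrite /frl mulr_ge0 ?frl_kernel_ge0.
rewrite (sum_pair_condl predT) -p_sum1; apply: eq_bigr => o _.
by rewrite /frl /= -big_distrr /= sum_frl_kernel mulr1.
Qed.

Lemma law_frl_fst (T : finType) (F : O -> T) : law frl (fun x => F x.1) =1 law p F.
Proof.
move=> t; rewrite /law (sum_pair_condl (fun o => F o == t)); apply: eq_bigr => o _.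
by rewrite /frl /= -big_distrr /= sum_frl_kernel mulr1.
Qed.

Lemma entropy_frl_fst (T : finType) (F : O -> T) :
  entropy frl (fun x => F x.1) = entropy p F.
Proof. exact/eq_entropy/law_frl_fst. Qed.

Lemma mutinfo_frl_fst (A B : finType) (f : O -> A) (g : O -> B) :
  mutinfo frl (fun x => f x.1) (fun x => g x.1) = mutinfo p f g.
Proof. by rewrite /mutinfo !entropy_frl_fst (entropy_frl_fst (pairRV f g)). Qed.

Lemma cmutinfo_frl_fst (A B C : finType) (f : O -> A) (g : O -> B) (h : O -> C) :
  cmutinfo frl (fun x => f x.1) (fun x => g x.1) (fun x => h x.1) = cmutinfo p f g h.
Proof.
rewrite /cmutinfo !entropy_frl_fst (entropy_frl_fst (pairRV f h)).
by rewrite (entropy_frl_fst (pairRV g h)) (entropy_frl_fst (pairRV (pairRV f g) h)).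
Qed.

Lemma expect_frl (H : O * {ffun TY -> TZ} -> R) (G : O -> R) :
  (forall x, frl x != 0 -> H x = G x.1) -> expect frl H = expect p G.
Proof.
move=> HG; rewrite /expect (sum_pair_condl predT); apply: eq_bigr => o _.
rewrite (eq_bigr (fun w => p o * G o * frl_kernel o w)).
  by rewrite -big_distrr /= sum_frl_kernel mulr1.
move=> w _; have [e|nz] := eqVneq (frl (o, w)) 0; last by rewrite HG // mulrAC.
by rewrite e mul0r mulrAC; move: e; rewrite /frl => ->; rewrite mul0r.
Qed.

Lemma law_frl_pair y w :
  law frl (pairRV (fun x => Y x.1) snd) (y, w) = law p Y y * \prod_(y' : TY) cond_law y' (w y').
Proof.
rewrite {1}/law.
have -> : \sum_(x | pairRV (fun x => Y x.1) snd x == (y, w)) frl x =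
          \sum_(o | Y o == y) \sum_(w' | w' == w) frl (o, w').
  by rewrite -sum_pair_cond; apply: eq_bigl => x; rewrite /pairRV xpair_eqE.
rewrite (eq_bigr (fun o => p o * (w y == Z o)%:R * \prod_(y' | y' != y) cond_law y' (w y'))); last first.
  move=> o /eqP hy; rewrite big_pred1_eq /frl /= -mulrA; congr (_ * _).
  rewrite /frl_kernel (bigD1 y) //= hy eqxx; congr (_ * _).
  by apply: eq_bigr => y' ne; rewrite (negbTE ne).
rewrite -big_distrl /= [in RHS](bigD1 y) //= mulrA -law_pair_cond_law; congr (_ * _).
rewrite /law [RHS](eq_bigl (fun o => (Y o == y) && (Z o == w y))); last first.
  by move=> o; rewrite /pairRV xpair_eqE.
rewrite [RHS]big_mkcondr /=; apply: eq_bigr => o _.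
by rewrite eq_sym; case: (Z o == w y); rewrite ?mulr1 ?mulr0.
Qed.

Lemma law_frl_snd w : law frl snd w = \prod_y cond_law y (w y).
Proof.
rewrite -(sum_law_pairl frl (fun x => Y x.1) snd w).
rewrite [LHS](eq_bigr (fun y => law p Y y * \prod_y' cond_law y' (w y'))) => [|y _]; last first.
  exact: law_frl_pair.
by rewrite -big_distrl /= sum_law p_sum1 mul1r.
Qed.

Lemma mutinfo_frl_indep : mutinfo frl snd (fun x => Y x.1) = 0.
Proof.
rewrite /mutinfo.
have -> : entropy frl (pairRV snd (fun x => Y x.1)) = entropy frl (pairRV (fun x => Y x.1) snd).
  by apply: entropy_equiv; rv_equiv_tac.
rewrite entropy_indep; first by ring.
  by case: frl_pmf.
by move=> y w; rewrite law_frl_pair law_frl_snd law_frl_fst.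
Qed.

(* Given [F], [w] has law [frl_kernel], which depends on [F] only through
   [(Y, Z)]; hence adding [w] adds the same amount of entropy to any such [F]. *)
Let kernel_entropy := - \sum_x frl x * ln (frl_kernel x.1 x.2).

Lemma entropy_frl_pair (T : finType) (F : O -> T) :
  (forall o o', F o = F o' -> Y o = Y o' /\ Z o = Z o') ->
  entropy frl (pairRV (fun x => F x.1) snd) = entropy p F + kernel_entropy.
Proof.
move=> FYZ.
have law_FW o w : law frl (pairRV (fun x => F x.1) snd) (F o, w) = frl_kernel o w * law p F (F o).
  rewrite /law mulrC big_distrl /=.
  have -> : \sum_(x | pairRV (fun x => F x.1) snd x == (F o, w)) frl x =
            \sum_(o' | F o' == F o) \sum_(w' | w' == w) frl (o', w').
    by rewrite -sum_pair_cond; apply: eq_bigl => x; rewrite /pairRV xpair_eqE.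
  apply: eq_bigr => o' /eqP /FYZ [eY eZ].
  by rewrite big_pred1_eq /frl /frl_kernel /= eY eZ mulrC.
rewrite !entropyE /kernel_entropy -opprD; congr (- _).
rewrite (sum_pair_condl predT) [in RHS](sum_pair_condl predT) -big_split /=.
apply: eq_bigr => o _.
rewrite (eq_bigr (fun w => p o * ln (law p F (F o)) * frl_kernel o w + frl (o, w) * ln (frl_kernel o w))).
  by rewrite big_split /= -big_distrr /= sum_frl_kernel mulr1.
move=> w _; rewrite /pairRV /= law_FW.
have [e|nz] := eqVneq (frl (o, w)) 0.
  by rewrite e !mul0r addr0; move: e; rewrite /frl /= mulrAC => ->; rewrite mul0r.
have [po Ko] : p o != 0 /\ frl_kernel o w != 0 by apply/andP; rewrite -negb_or -mulf_eq0.
rewrite lnM ?posrE ?law_gt0 //; last by rewrite lt_def Ko frl_kernel_ge0.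
by rewrite mulrDr addrC /frl /= mulrAC.
Qed.

Lemma cmutinfo_frl (A : finType) (X : O -> A) :
  cmutinfo frl (fun x => X x.1) snd (fun x => Y x.1) = cmutinfo p X Z Y.
Proof.
rewrite /cmutinfo.
have -> : entropy frl (pairRV snd (fun x => Y x.1)) =
          entropy frl (pairRV (fun x => pairRV Z Y x.1) snd).
  apply: entropy_equiv => x x' /frl_supp Zx /frl_supp Zx'.
  rewrite /pairRV !xpair_eqE -Zx -Zx'.
  by case: (x.2 =P x'.2) => [->|]; case: (Y x.1 =P Y x'.1) => [->|]; rewrite ?eqxx ?andbF ?andbT.
have -> : entropy frl (pairRV (pairRV (fun x => X x.1) snd) (fun x => Y x.1)) =
          entropy frl (pairRV (fun x => pairRV (pairRV X Z) Y x.1) snd).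
  apply: entropy_equiv => x x' /frl_supp Zx /frl_supp Zx'.
  rewrite /pairRV !xpair_eqE -Zx -Zx'.
  by case: (x.2 =P x'.2) => [->|]; case: (Y x.1 =P Y x'.1) => [->|]; rewrite ?eqxx ?andbF ?andbT.
rewrite !entropy_frl_pair; last 2 first.
- by move=> o o' [eX eZ eY].
- by move=> o o' [eZ eY].
rewrite (entropy_frl_fst (pairRV X Y)) entropy_frl_fst; ring.
Qed.

End FunctionalRepresentation.

Section TimeSharing.
Variables (R : realType) (O : finType) (P : O -> R) (q : R).
Hypotheses (pP : is_pmf P) (q_ge0 : 0 <= q) (q_le1 : q <= 1).

Definition coin (b : bool) : R := if b then q else 1 - q.
Definition tshare (x : bool * O) : R := coin x.1 * P x.2.
Definition binary_entropy : R := - (q * ln q + (1 - q) * ln (1 - q)).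

Let P_ge0 : forall w, 0 <= P w. Proof. by case: pP. Qed.
Let P_sum1 : \sum_w P w = 1. Proof. by case: pP. Qed.

Lemma coin_ge0 b : 0 <= coin b. Proof. by case: b => //=; rewrite subr_ge0. Qed.

Lemma sum_bool_pair (G : bool * O -> R) :
  \sum_x G x = \sum_o G (true, o) + \sum_o G (false, o).
Proof. by rewrite (sum_pair_condl predT) big_bool. Qed.

Lemma tshare_pmf : is_pmf tshare.
Proof.
split; first by move=> [b o]; rewrite /tshare mulr_ge0 ?coin_ge0.
by rewrite sum_bool_pair /tshare /= -!big_distrr /= P_sum1; ring.
Qed.

Lemma law_tshare_snd (T : finType) (F : O -> T) : law tshare (fun x => F x.2) =1 law P F.
Proof.
move=> t; rewrite /law big_mkcond sum_bool_pair /= -big_split /= [RHS]big_mkcond.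
by apply: eq_bigr => o _; rewrite /tshare /=; case: ifP => _; rewrite ?addr0 // -mulrDl subrKC mul1r.
Qed.

Lemma expect_tshare (H : bool * O -> R) :
  expect tshare H = q * expect P (fun o => H (true, o)) + (1 - q) * expect P (fun o => H (false, o)).
Proof.
rewrite /expect sum_bool_pair !big_distrr /=.
by congr (_ + _); apply: eq_bigr => o _; rewrite /tshare /= mulrA.
Qed.

Lemma law_tshare_pair (T : finType) (G : bool * O -> T) b t :
  law tshare (fun x => (x.1, G x)) (b, t) = coin b * law P (fun o => G (b, o)) t.
Proof.
rewrite /law big_mkcond sum_bool_pair /= big_distrr /= [in RHS]big_mkcond /=.
case: b => /=.
  rewrite [X in _ + X]big1 ?addr0; last by move=> o _; rewrite ?xpair_eqE.
  by apply: eq_bigr => o _; rewrite ?xpair_eqE ?eqxx /=; case: ifP; rewrite ?mulr0.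
rewrite big1 ?add0r; last by move=> o _; rewrite ?xpair_eqE.
by apply: eq_bigr => o _; rewrite ?xpair_eqE ?eqxx /=; case: ifP; rewrite ?mulr0.
Qed.

Lemma entropy_tshare (T : finType) (F : bool -> O -> T) :
  entropy tshare (fun x => (x.1, F x.1 x.2)) =
  binary_entropy + q * entropy P (F true) + (1 - q) * entropy P (F false).
Proof.
have branch b : \sum_o tshare (b, o) * ln (law tshare (fun x => (x.1, F x.1 x.2)) (b, F b o))
    = coin b * ln (coin b) + coin b * \sum_o P o * ln (law P (F b) (F b o)).
  have [e|nz] := eqVneq (coin b) 0.
    by rewrite e !mul0r add0r big1 // => o _; rewrite /tshare /= e !mul0r.
  rewrite big_distrr /= -[X in X + _]mulr1 -P_sum1 big_distrr -big_split /=.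
  apply: eq_bigr => o _; rewrite /tshare /=.
  have [->|Po] := eqVneq (P o) 0; first by rewrite !(mulr0, mul0r) addr0.
  rewrite (law_tshare_pair (fun x => F x.1 x.2)) /= lnM ?posrE ?law_gt0 //; first by ring.
  by rewrite lt_def nz coin_ge0.
by rewrite entropyE sum_bool_pair /= !branch !entropyE /binary_entropy /coin; ring.
Qed.

Lemma rv_equiv_tshare_pair (A C C' : finType) (f : bool * O -> A) (H : bool * O -> C)
    (h : bool -> O -> C') :
  rv_equiv tshare H (fun x => (x.1, h x.1 x.2)) ->
  rv_equiv tshare (pairRV f H) (fun x => (x.1, pairRV (fun o => f (x.1, o)) (h x.1) x.2)).
Proof.
move=> Hh; apply: rv_equiv_trans (rv_equiv_pair (rv_equiv_refl f) Hh) _.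
by move=> [b o] [b' o'] _ _; rewrite /pairRV /= !xpair_eqE; btauto.
Qed.

Lemma mutinfo_tshare (A B B' : finType) (f : O -> A) (G : bool * O -> B) (g : bool -> O -> B') :
  rv_equiv tshare G (fun x => (x.1, g x.1 x.2)) ->
  mutinfo tshare (fun x => f x.2) G = q * mutinfo P f (g true) + (1 - q) * mutinfo P f (g false).
Proof.
move=> Gg; rewrite /mutinfo (eq_entropy (law_tshare_snd f)) (entropy_equiv Gg).
rewrite (entropy_equiv (rv_equiv_tshare_pair (fun x => f x.2) Gg)).
rewrite (entropy_tshare (fun b => pairRV f (g b))) entropy_tshare; ring.
Qed.

Lemma cmutinfo_tshare (A B C C' : finType) (f : bool * O -> A) (g : bool * O -> B)
    (H : bool * O -> C) (h : bool -> O -> C') :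
  rv_equiv tshare H (fun x => (x.1, h x.1 x.2)) ->
  cmutinfo tshare f g H =
  q * cmutinfo P (fun o => f (true, o)) (fun o => g (true, o)) (h true) +
  (1 - q) * cmutinfo P (fun o => f (false, o)) (fun o => g (false, o)) (h false).
Proof.
move=> Hh; rewrite /cmutinfo (entropy_equiv Hh).
rewrite (entropy_equiv (rv_equiv_tshare_pair f Hh)) (entropy_equiv (rv_equiv_tshare_pair g Hh)).
rewrite (entropy_equiv (rv_equiv_tshare_pair (pairRV f g) Hh)).
rewrite (entropy_tshare (fun b => pairRV (fun o => f (b, o)) (h b))).
rewrite (entropy_tshare (fun b => pairRV (fun o => g (b, o)) (h b))).
rewrite (entropy_tshare (fun b => pairRV (fun o => (f (b, o), g (b, o))) (h b))).
rewrite entropy_tshare; ring.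
Qed.

Lemma ZB_sum_rate_tshare (A B0 B1 B2 : finType) (f : O -> A) (g0 : bool -> O -> B0)
    (g1 : bool -> O -> B1) (g2 : bool -> O -> B2) :
  ZB_sum_rate tshare (fun x => f x.2) (fun x => (x.1, g0 x.1 x.2))
    (fun x => g1 x.1 x.2) (fun x => g2 x.1 x.2) =
  q * ZB_sum_rate P f (g0 true) (g1 true) (g2 true) +
  (1 - q) * ZB_sum_rate P f (g0 false) (g1 false) (g2 false).
Proof.
have g0_equiv : rv_equiv tshare (fun x => (x.1, g0 x.1 x.2)) (fun x => (x.1, g0 x.1 x.2)) by [].
rewrite /ZB_sum_rate (mutinfo_tshare f g0_equiv) !(cmutinfo_tshare _ _ g0_equiv) /=; ring.
Qed.

End TimeSharing.

Lemma split_weight (R : realFieldType) (c x y : R) :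
  0 <= x -> 0 <= y -> c <= x + y ->
  exists q, [/\ 0 <= q, q <= 1, q * c <= x & (1 - q) * c <= y].
Proof.
move=> x0 y0 cxy; have [cx|xc] := lerP c x; first by exists 1; split; lra.
have c0 : 0 < c by lra.
exists (x / c); split; rewrite ?divr_ge0 ?ler_pdivrMr ?mul1r ?mulrBl ?divfK ?gt_eqF //; lra.
Qed.

Lemma convex_comb_le (R : realFieldType) (q a b s t t' : R) :
  0 <= q -> q <= 1 -> a <= s + t -> b <= s + t' ->
  q * a + (1 - q) * b <= s + (q * t + (1 - q) * t').
Proof. by move=> *; nra. Qed.

Section Refinement.
Variables (R : realType) (O Xs T0 T1 T2 T12 : finType) (p : O -> R) (X : O -> Xs).
Variables (U0 : O -> T0) (U1 : O -> T1) (U2 : O -> T2) (U12 : O -> T12) (z0 : T12).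
Variable q : R.
Hypotheses (pp : is_pmf p) (q_ge0 : 0 <= q) (q_le1 : q <= 1).

Local Notation Y := (pairRV (pairRV U0 U1) U2).
Local Notation Om := (O * {ffun ((T0 * T1) * T2)%type -> T12})%type.
Local Notation P1 := (frl p Y U12 z0).
Local Notation X1 := (fun x : Om => X x.1).
Local Notation A0 := (fun x : Om => U0 x.1).
Local Notation A1 := (fun x : Om => U1 x.1).
Local Notation A2 := (fun x : Om => U2 x.1).
Local Notation W := (fun x : Om => x.2).

(* Description [1] receives [W] in the branch [b = true], description [2] otherwise;
   the other one gets a constant in its place. *)
Definition refine1 (b : bool) (x : Om) := (U1 x.1, if b then x.2 else [ffun=> z0]).
Definition refine2 (b : bool) (x : Om) := (U2 x.1, if b then [ffun=> z0] else x.2).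

Let P1_pmf : is_pmf P1 := frl_pmf Y U12 z0 pp.
Let c := cmutinfo p X U12 Y.

Let W_indep : mutinfo P1 W (pairRV (pairRV A0 A1) A2) = 0.
Proof. exact: mutinfo_frl_indep Y U12 z0 pp. Qed.

Let W_indep' : mutinfo P1 W (pairRV (pairRV A0 A2) A1) = 0.
Proof. by rewrite -W_indep; apply: mutinfo_equiv; rv_equiv_tac. Qed.

Let cmutinfo_W : cmutinfo P1 X1 W (pairRV (pairRV A0 A1) A2) = c.
Proof. by rewrite /c -(cmutinfo_frl Y U12 z0 pp X). Qed.

Lemma mutinfo_refine1_le b :
  mutinfo P1 X1 (pairRV A0 (refine1 b)) <= mutinfo p X (pairRV U0 U1) + (if b then c else 0).
Proof.
case: b.
  have -> : mutinfo P1 X1 (pairRV A0 (refine1 true)) = mutinfo P1 X1 (pairRV (pairRV A0 A1) W).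
    by apply: mutinfo_equiv; rv_equiv_tac.
  rewrite -cmutinfo_W -(mutinfo_frl_fst p Y U12 z0 X (pairRV U0 U1)).
  exact: mutinfo_refine_le.
have -> : mutinfo P1 X1 (pairRV A0 (refine1 false)) = mutinfo P1 X1 (pairRV A0 A1).
  by apply: mutinfo_equiv; rv_equiv_tac.
by rewrite (mutinfo_frl_fst p Y U12 z0 X (pairRV U0 U1)) addr0.
Qed.

Lemma mutinfo_refine2_le b :
  mutinfo P1 X1 (pairRV A0 (refine2 b)) <= mutinfo p X (pairRV U0 U2) + (if b then 0 else c).
Proof.
case: b.
  have -> : mutinfo P1 X1 (pairRV A0 (refine2 true)) = mutinfo P1 X1 (pairRV A0 A2).
    by apply: mutinfo_equiv; rv_equiv_tac.
  by rewrite (mutinfo_frl_fst p Y U12 z0 X (pairRV U0 U2)) addr0.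
have -> : mutinfo P1 X1 (pairRV A0 (refine2 false)) = mutinfo P1 X1 (pairRV (pairRV A0 A2) W).
  by apply: mutinfo_equiv; rv_equiv_tac.
have -> : c = cmutinfo P1 X1 W (pairRV (pairRV A0 A2) A1).
  by rewrite -cmutinfo_W; apply: cmutinfo_equiv; rv_equiv_tac.
rewrite -(mutinfo_frl_fst p Y U12 z0 X (pairRV U0 U2)).
exact: mutinfo_refine_le.
Qed.

Lemma ZB_sum_rate_refine b :
  ZB_sum_rate P1 X1 A0 (refine1 b) (refine2 b) = ZB_sum_rate p X U0 U1 U2 + c.
Proof.
rewrite /ZB_sum_rate.
have -> : cmutinfo P1 X1 (pairRV (refine1 b) (refine2 b)) A0 =
          cmutinfo P1 X1 (pairRV (pairRV A1 A2) W) A0.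
  by apply: cmutinfo_equiv; case: b; rv_equiv_tac.
have -> : cmutinfo P1 X1 (pairRV (pairRV A1 A2) W) A0 = cmutinfo p X (pairRV U1 U2) U0 + c.
  rewrite cmutinfo_pairr (cmutinfo_frl_fst p Y U12 z0 X (pairRV U1 U2) U0) -cmutinfo_W.
  by congr (_ + _); apply: cmutinfo_equiv; rv_equiv_tac.
have -> : cmutinfo P1 (refine1 b) (refine2 b) A0 = cmutinfo p U1 U2 U0.
  case: b.
    have -> : cmutinfo P1 (refine1 true) (refine2 true) A0 = cmutinfo P1 A2 (pairRV A1 W) A0.
      by rewrite cmutinfoC; apply: cmutinfo_equiv; rv_equiv_tac.
    rewrite cmutinfo_pairr (cmutinfo_indep0 P1_pmf W_indep) addr0 cmutinfoC.
    exact: cmutinfo_frl_fst.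
  have -> : cmutinfo P1 (refine1 false) (refine2 false) A0 = cmutinfo P1 A1 (pairRV A2 W) A0.
    by apply: cmutinfo_equiv; rv_equiv_tac.
  rewrite cmutinfo_pairr (cmutinfo_indep0 P1_pmf W_indep') addr0.
  exact: cmutinfo_frl_fst.
by rewrite (mutinfo_frl_fst p Y U12 z0 X U0); ring.
Qed.

Local Notation Q := (tshare P1 q).
Local Notation V0 := (fun x : bool * Om => (x.1, U0 x.2.1)).
Local Notation V1 := (fun x : bool * Om => refine1 x.1 x.2).
Local Notation V2 := (fun x : bool * Om => refine2 x.1 x.2).

Lemma law_tshare_frl_fst (T : finType) (F : O -> T) : law Q (fun x => F x.2.1) =1 law p F.
Proof. by move=> t; rewrite (law_tshare_snd _ _ (fun x => F x.1)) law_frl_fst. Qed.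

Lemma mutinfo_tshare_refine1_le :
  mutinfo Q (fun x => X x.2.1) (pairRV V0 V1) <= mutinfo p X (pairRV U0 U1) + q * c.
Proof.
rewrite (mutinfo_tshare P1_pmf q_ge0 q_le1 X1 (g := fun b => pairRV A0 (refine1 b)));
  last by rv_equiv_tac.
apply: le_trans (convex_comb_le q_ge0 q_le1 (mutinfo_refine1_le true) (mutinfo_refine1_le false)) _.
by rewrite mulr0 addr0.
Qed.

Lemma mutinfo_tshare_refine2_le :
  mutinfo Q (fun x => X x.2.1) (pairRV V0 V2) <= mutinfo p X (pairRV U0 U2) + (1 - q) * c.
Proof.
rewrite (mutinfo_tshare P1_pmf q_ge0 q_le1 X1 (g := fun b => pairRV A0 (refine2 b)));
  last by rv_equiv_tac.
apply: le_trans (convex_comb_le q_ge0 q_le1 (mutinfo_refine2_le true) (mutinfo_refine2_le false)) _.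
by rewrite mulr0 add0r.
Qed.

Lemma ZB_sum_rate_tshare_refine :
  ZB_sum_rate Q (fun x => X x.2.1) V0 V1 V2 = ZB_sum_rate p X U0 U1 U2 + c.
Proof.
rewrite (ZB_sum_rate_tshare P1_pmf q_ge0 q_le1 X1 (fun _ => A0) refine1 refine2).
by rewrite !ZB_sum_rate_refine -mulrDl addrC subrK mul1r.
Qed.

Lemma expect_tshare_frl (H : bool * Om -> R) (G : O -> R) :
  (forall b x, P1 x != 0 -> H (b, x) = G x.1) -> expect Q H = expect p G.
Proof.
move=> HG; have HG' b : expect P1 (fun x => H (b, x)) = expect p G.
  by apply: expect_frl => x /HG.
by rewrite expect_tshare !HG' -mulrDl addrC subrK mul1r.
Qed.

End Refinement.

Section Psi.
Variables (R : realType) (O Xs T0 T1 T2 T12 : finType) (p : O -> R) (X : O -> Xs).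
Variables (U0 : O -> T0) (U1 : O -> T1) (U2 : O -> T2) (U12 : O -> T12).

Lemma psi_1E : psi_1 p X U0 U1 = mutinfo p X (pairRV U0 U1).
Proof.
rewrite /psi_1 /mutinfo /cond_entropy.
have -> : entropy p (pairRV (pairRV U0 U1) X) = entropy p (pairRV X (pairRV U0 U1)).
  by apply: entropy_equiv; rv_equiv_tac.
have -> : entropy p (pairRV U1 U0) = entropy p (pairRV U0 U1).
  by apply: entropy_equiv; rv_equiv_tac.
by ring.
Qed.

Lemma psi_12E :
  psi_12 p X U0 U1 U2 U12 =
  ZB_sum_rate p X U0 U1 U2 + cmutinfo p X U12 (pairRV (pairRV U0 U1) U2).
Proof.
rewrite /psi_12 /ZB_sum_rate /mutinfo /cmutinfo /cond_entropy.
have -> : entropy p (pairRV (pairRV (pairRV (pairRV U0 U1) U2) U12) X) =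
          entropy p (pairRV (pairRV X U12) (pairRV (pairRV U0 U1) U2)).
  by apply: entropy_equiv; rv_equiv_tac.
have -> : entropy p (pairRV (pairRV U1 U2) U0) = entropy p (pairRV (pairRV U0 U1) U2).
  by apply: entropy_equiv; rv_equiv_tac.
have -> : entropy p (pairRV (pairRV X (pairRV U1 U2)) U0) =
          entropy p (pairRV X (pairRV (pairRV U0 U1) U2)).
  by apply: entropy_equiv; rv_equiv_tac.
have -> : entropy p (pairRV U12 (pairRV (pairRV U0 U1) U2)) =
          entropy p (pairRV (pairRV (pairRV U0 U1) U2) U12).
  by apply: entropy_equiv; rv_equiv_tac.
by ring.
Qed.

End Psi.

Lemma ZB_sub_VKG (R : realType) (Xs Xh : finType) (pX : Xs -> R) (d : Xs -> Xh -> R)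
    R1 R2 D1 D2 D12 :
  RD_ZB pX d R1 R2 D1 D2 D12 -> RD_VKG pX d R1 R2 D1 D2 D12.
Proof.
case=> O [p [X [T0 [T1 [T2 [U0 [U1 [U2 [phi1 [phi2 [phi12 [pp [hX [h1 [h2 [h12 hD]]]]]]]]]]]]]]]].
exists O, p, X, T0, T1, T2, unit, U0, U1, U2, (fun _ => tt), phi1, phi2.
exists (fun u0 u1 u2 _ => phi12 u0 u1 u2).
by rewrite !psi_1E psi_12E cmutinfo_cst addr0.
Qed.

Lemma is_pmf_inhabited (R : realType) (O : finType) (p : O -> R) :
  is_pmf p -> exists o : O, true.
Proof.
case=> _ p1; case: (pickP (fun _ : O => true)) => [o _|none]; first by exists o.
by move: p1; rewrite big_pred0 // => /eqP; rewrite eq_sym oner_eq0.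
Qed.

Lemma VKG_sub_ZB (R : realType) (Xs Xh : finType) (pX : Xs -> R) (d : Xs -> Xh -> R)
    R1 R2 D1 D2 D12 :
  RD_VKG pX d R1 R2 D1 D2 D12 -> RD_ZB pX d R1 R2 D1 D2 D12.
Proof.
case=> O [p [X [T0 [T1 [T2 [T12 [U0 [U1 [U2 [U12 [phi1 [phi2 [phi12
  [pp [hX [h1 [h2 [h12 [hD1 [hD2 hD12]]]]]]]]]]]]]]]]]]]].
rewrite !psi_1E in h1 h2; rewrite psi_12E in h12.
have [o0 _] := is_pmf_inhabited pp; pose z0 := U12 o0.
set c := cmutinfo p X U12 _ in h12; pose Y := pairRV (pairRV U0 U1) U2.
have [q [q_ge0 q_le1 qc1 qc2]] : exists q, [/\ 0 <= q, q <= 1,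
    q * c <= R1 - mutinfo p X (pairRV U0 U1) & (1 - q) * c <= R2 - mutinfo p X (pairRV U0 U2)].
  by apply: split_weight; have := mutinfo_pairr_add_le X U0 U1 U2 pp; lra.
pose F := {ffun ((T0 * T1) * T2)%type -> T12}.
exists (bool * (O * F))%type, (tshare (frl p Y U12 z0) q), (fun x => X x.2.1).
exists (bool * T0)%type, (T1 * F)%type, (T2 * F)%type.
exists (fun x => (x.1, U0 x.2.1)), (fun x => refine1 U1 z0 x.1 x.2), (fun x => refine2 U2 z0 x.1 x.2).
exists (fun v0 v1 => phi1 v0.2 v1.1), (fun v0 v2 => phi2 v0.2 v2.1).
(* [W] is read off whichever description carries it in the branch [v0.1]. *)
exists (fun (v0 : bool * T0) (v1 : T1 * F) (v2 : T2 * F) =>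
  phi12 v0.2 v1.1 v2.1 ((if v0.1 then v1.2 else v2.2) ((v0.2, v1.1), v2.1))).
have tshare_pmf := tshare_pmf (frl_pmf Y U12 z0 pp) q_ge0 q_le1.
split => //; split; first by move=> x; rewrite law_tshare_frl_fst.
split; first by have := mutinfo_tshare_refine1_le X U0 U1 U2 U12 z0 pp q_ge0 q_le1; rewrite -/c; lra.
split; first by have := mutinfo_tshare_refine2_le X U0 U1 U2 U12 z0 pp q_ge0 q_le1; rewrite -/c; lra.
split; first by move: (ZB_sum_rate_tshare_refine X U0 U1 U2 U12 z0 pp q_ge0 q_le1) h12;
  rewrite /ZB_sum_rate => ->.
split; first by rewrite (expect_tshare_frl q (G := fun o => d (X o) (phi1 (U0 o) (U1 o)))).
split; first by rewrite (expect_tshare_frl q (G := fun o => d (X o) (phi2 (U0 o) (U2 o)))).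
rewrite (expect_tshare_frl q (G := fun o => d (X o) (phi12 (U0 o) (U1 o) (U2 o) (U12 o)))) //.
by case=> x /frl_supp; rewrite /pairRV /= => ->.
Qed.

Theorem corollary2 (R : realType) (Xs Xh : finType) (pX : Xs -> R)
  (d : Xs -> Xh -> R)
  (pX_ge0 : forall x, 0 <= pX x) (pX_sum1 : \sum_(x : Xs) pX x = 1)
  (d_ge0 : forall x y, 0 <= d x y) :
  forall R1 R2 D1 D2 D12 : R,
    RD_ZB pX d R1 R2 D1 D2 D12 <-> RD_VKG pX d R1 R2 D1 D2 D12.
Proof. by move=> R1 R2 D1 D2 D12; split; [exact: ZB_sub_VKG | exact: VKG_sub_ZB]. Qed.
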